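(* Let $\mathbf{A}\in V(\mathsf{BCA})$. Then: (1) $\mathbf{A}\models J_2x\approx x$ if and only if the $\{\wedge,\vee,\neg,0,1\}$-reduct of $\mathbf{A}$ is a Boolean algebra; (2) $\mathbf{A}\models J_2x\approx 1$ if and only if the $\{\wedge,\vee,\neg,0,1\}$-reduct of $\mathbf{A}$ is a semilattice (with zero). Here a semilattice means an involutive bisemilattice satisfying $x\vee y\approx x\wedge y$, equivalently $\neg x\approx x$, equivalently $0\approx 1$.
   Context: $\mathbf{WK}^e$ is the three-element algebra on $\{0,\tfrac12,1\}$ of type $\langle\wedge,\vee,\neg,J_2,0,1\rangle$. Its operations are: - $\neg$ swaps $0,1$ and fixes $\tfrac12$; - $\wedge,\vee$ are Boolean on $\{0,1\}$ and return $\tfrac12$ if some argument is $\tfrac12$; - $J_2(1)=1$ and $J_2(\tfrac12)=J_2(0)=0$. $\mathsf{BCA}=ISP(\mathbf{WK}^e)$ and $V(\mathsf{BCA})=HSP(\mathbf{WK}^e)$. An involutive bisemilattice is an algebra $\langle A,\wedge,\vee,\neg,0,1\rangle$ satisfying: - $x\vee x\approx x$; - $x\vee y\approx y\vee x$; - $x\vee(y\vee z)\approx(x\vee y)\vee z$; - $\neg\neg x\approx x$; - $x\wedge y\approx\neg(\neg x\vee\neg y)$; - $x\wedge(\neg x\vee y)\approx x\wedge y$; - $0\vee x\approx x$; - $1\approx\neg 0$. The $\{\wedge,\vee,\neg,0,1\}$-reduct of every member of $V(\mathsf{BCA})$ is an involutive bisemilattice. *)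

Record alg : Type := Alg {
  car  :> Type;
  meet : car -> car -> car;
  join : car -> car -> car;
  neg  : car -> car;
  j2   : car -> car;
  zero : car;
  one  : car
}.

Inductive wk3 : Type := W0 | Whalf | W1.

Definition wk_neg (x : wk3) : wk3 :=
  match x with W0 => W1 | Whalf => Whalf | W1 => W0 end.

Definition wk_meet (x y : wk3) : wk3 :=
  match x, y with
  | Whalf, _ | _, Whalf => Whalf
  | W1, W1 => W1
  | _, _ => W0
  end.

Definition wk_join (x y : wk3) : wk3 :=
  match x, y with
  | Whalf, _ | _, Whalf => Whalf
  | W0, W0 => W0
  | _, _ => W1
  end.

Definition wk_j2 (x : wk3) : wk3 :=
  match x with W1 => W1 | _ => W0 end.

Definition WKe : alg := Alg wk3 wk_meet wk_join wk_neg wk_j2 W0 W1.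

Definition subpower_closed (I : Type) (S : (I -> wk3) -> Prop) : Prop :=
  (forall f g, S f -> S g -> S (fun i => wk_meet (f i) (g i))) /\
  (forall f g, S f -> S g -> S (fun i => wk_join (f i) (g i))) /\
  (forall f, S f -> S (fun i => wk_neg (f i))) /\
  (forall f, S f -> S (fun i => wk_j2 (f i))) /\
  S (fun _ => W0) /\
  S (fun _ => W1).

(* A is in HSP(WK^e) = V(BCA): A is a homomorphic image of a subalgebra S of
   a direct power WK^e^I, via a surjective homomorphism h : S -> A. *)
Definition in_V_BCA (A : alg) : Prop :=
  exists (I : Type) (S : (I -> wk3) -> Prop) (h : {f | S f} -> A),
    @subpower_closed I S /\
    (forall a : A, exists x, h x = a) /\
    (forall x y : {f | S f}, forall Hm,
        h (exist _ (fun i => wk_meet (proj1_sig x i) (proj1_sig y i)) Hm)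
        = meet A (h x) (h y)) /\
    (forall x y : {f | S f}, forall Hj,
        h (exist _ (fun i => wk_join (proj1_sig x i) (proj1_sig y i)) Hj)
        = join A (h x) (h y)) /\
    (forall x : {f | S f}, forall Hn,
        h (exist _ (fun i => wk_neg (proj1_sig x i)) Hn) = neg A (h x)) /\
    (forall x : {f | S f}, forall Hn,
        h (exist _ (fun i => wk_j2 (proj1_sig x i)) Hn) = j2 A (h x)) /\
    (forall H0, h (exist _ (fun _ => W0) H0) = zero A) /\
    (forall H1, h (exist _ (fun _ => W1) H1) = one A).

Definition reduct_is_boolean (A : alg) : Prop :=
  (forall x y z : A, join A x (join A y z) = join A (join A x y) z) /\
  (forall x y z : A, meet A x (meet A y z) = meet A (meet A x y) z) /\
  (forall x y : A, join A x y = join A y x) /\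
  (forall x y : A, meet A x y = meet A y x) /\
  (forall x y : A, join A x (meet A x y) = x) /\
  (forall x y : A, meet A x (join A x y) = x) /\
  (forall x y z : A, meet A x (join A y z) = join A (meet A x y) (meet A x z)) /\
  (forall x : A, join A x (zero A) = x) /\
  (forall x : A, meet A x (one A) = x) /\
  (forall x : A, join A x (neg A x) = one A) /\
  (forall x : A, meet A x (neg A x) = zero A).

Definition reduct_is_IBSL (A : alg) : Prop :=
  (forall x : A, join A x x = x) /\
  (forall x y : A, join A x y = join A y x) /\
  (forall x y z : A, join A x (join A y z) = join A (join A x y) z) /\
  (forall x : A, neg A (neg A x) = x) /\
  (forall x y : A, meet A x y = neg A (join A (neg A x) (neg A y))) /\
  (forall x y : A, meet A x (join A (neg A x) y) = meet A x y) /\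
  (forall x : A, join A (zero A) x = x) /\
  one A = neg A (zero A).

Definition reduct_is_semilattice (A : alg) : Prop :=
  reduct_is_IBSL A /\ (forall x y : A, join A x y = meet A x y).

(* Every identity of WK^e holds in each homomorphic image of a subalgebra of a
   power of WK^e, so it suffices to check each law on the three elements of WK^e.
   (1) If J2 is the identity, a Boolean law s = t follows from s[J2 x/x] = t[J2 x/x],
   an identity of WK^e because J2 takes values in the Boolean subalgebra {0, 1};
   conversely x = J2 x /\ (x \/ -x) gives J2 x = x in a Boolean algebra.
   (2) Both conditions are equivalent to 0 = 1: use J2 0 = 0, J2 x \/ 0 = J2 x,
   J2 x \/ 1 = 1, 0 /\ 1 = 0 and 0 \/ 1 = 1; and 0 = 1 forces -x = x through
   x \/ 0 = x and x \/ 1 = -x \/ 1, which collapses /\ onto \/. *)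

From Stdlib Require Import List FunctionalExtensionality ProofIrrelevance
  IndefiniteDescription.

Inductive term : Type :=
  | Var (n : nat)
  | Meet (s t : term)
  | Join (s t : term)
  | Neg (t : term)
  | J2 (t : term)
  | Zero
  | One.

Fixpoint eval (A : alg) (v : nat -> A) (t : term) : A :=
  match t with
  | Var n => v n
  | Meet s t => meet A (eval A v s) (eval A v t)
  | Join s t => join A (eval A v s) (eval A v t)
  | Neg t => neg A (eval A v t)
  | J2 t => j2 A (eval A v t)
  | Zero => zero A
  | One => one A
  end.

Definition holds (A : alg) (s t : term) : Prop :=
  forall v : nat -> A, eval A v s = eval A v t.

Fixpoint subst (sigma : nat -> term) (t : term) : term :=
  match t with
  | Var n => sigma n
  | Meet s t => Meet (subst sigma s) (subst sigma t)
  | Join s t => Join (subst sigma s) (subst sigma t)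
  | Neg t => Neg (subst sigma t)
  | J2 t => J2 (subst sigma t)
  | Zero => Zero
  | One => One
  end.

Lemma eval_subst (A : alg) (v : nat -> A) (sigma : nat -> term) (t : term) :
  eval A v (subst sigma t) = eval A (fun n => eval A v (sigma n)) t.
Proof. induction t; simpl; congruence. Qed.

Section SubpowerImage.

Variables (I : Type) (S : (I -> wk3) -> Prop) (A : alg) (h : {f | S f} -> A).
Hypothesis S_closed : subpower_closed I S.
Hypothesis h_meet : forall x y Hm,
  h (exist _ (fun i => wk_meet (proj1_sig x i) (proj1_sig y i)) Hm) = meet A (h x) (h y).
Hypothesis h_join : forall x y Hj,
  h (exist _ (fun i => wk_join (proj1_sig x i) (proj1_sig y i)) Hj) = join A (h x) (h y).
Hypothesis h_neg : forall x Hn,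
  h (exist _ (fun i => wk_neg (proj1_sig x i)) Hn) = neg A (h x).
Hypothesis h_j2 : forall x Hn,
  h (exist _ (fun i => wk_j2 (proj1_sig x i)) Hn) = j2 A (h x).
Hypothesis h_zero : forall H0, h (exist _ (fun _ => W0) H0) = zero A.
Hypothesis h_one : forall H1, h (exist _ (fun _ => W1) H1) = one A.

Definition eval_power (w : nat -> {f | S f}) (t : term) : I -> wk3 :=
  fun i => eval WKe (fun n => proj1_sig (w n) i) t.

Lemma S_eval_power (w : nat -> {f | S f}) (t : term) : S (eval_power w t).
Proof.
  destruct S_closed as (Cm & Cj & Cn & Cj2 & C0 & C1).
  induction t as [n | s IHs t IHt | s IHs t IHt | t IHt | t IHt | |].
  - exact (proj2_sig (w n)).
  - exact (Cm _ _ IHs IHt).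
  - exact (Cj _ _ IHs IHt).
  - exact (Cn _ IHt).
  - exact (Cj2 _ IHt).
  - exact C0.
  - exact C1.
Qed.

Lemma h_exist_eq (f g : I -> wk3) (pf : S f) (pg : S g) :
  f = g -> h (exist _ f pf) = h (exist _ g pg).
Proof. intros <-. rewrite (proof_irrelevance _ pf pg). reflexivity. Qed.

Lemma h_eval_power (w : nat -> {f | S f}) (t : term) (p : S (eval_power w t)) :
  h (exist _ (eval_power w t) p) = eval A (fun n => h (w n)) t.
Proof.
  induction t as [n | s IHs t IHt | s IHs t IHt | t IHt | t IHt | |]; simpl.
  - rewrite (h_exist_eq _ (proj1_sig (w n)) p (proj2_sig (w n)) eq_refl).
    destruct (w n); reflexivity.
  - rewrite <- (IHs (S_eval_power w s)), <- (IHt (S_eval_power w t)).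
    exact (h_meet (exist _ _ _) (exist _ _ _) p).
  - rewrite <- (IHs (S_eval_power w s)), <- (IHt (S_eval_power w t)).
    exact (h_join (exist _ _ _) (exist _ _ _) p).
  - rewrite <- (IHt (S_eval_power w t)).
    exact (h_neg (exist _ _ _) p).
  - rewrite <- (IHt (S_eval_power w t)).
    exact (h_j2 (exist _ _ _) p).
  - exact (h_zero p).
  - exact (h_one p).
Qed.

Lemma h_onto_holds (s t : term) :
  (forall a : A, exists x, h x = a) -> holds WKe s t -> holds A s t.
Proof.
  intros h_onto Hst v.
  destruct (functional_choice (fun n x => h x = v n) (fun n => h_onto (v n)))
    as [w Hw].
  replace v with (fun n => h (w n)) by (apply functional_extensionality; exact Hw).
  rewrite <- (h_eval_power w s (S_eval_power w s)),
          <- (h_eval_power w t (S_eval_power w t)).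
  apply h_exist_eq, functional_extensionality; intro i. apply Hst.
Qed.

End SubpowerImage.

Lemma in_V_BCA_holds (A : alg) (s t : term) :
  in_V_BCA A -> holds WKe s t -> holds A s t.
Proof.
  intros (I & S & h & S_closed & h_onto & hm & hj & hn & hj2 & h0 & h1).
  exact (h_onto_holds I S A h S_closed hm hj hn hj2 h0 h1 s t h_onto).
Qed.

Ltac atoms A e l :=
  lazymatch e with
  | meet A ?s ?t => let l := atoms A s l in atoms A t l
  | join A ?s ?t => let l := atoms A s l in atoms A t l
  | neg A ?s => atoms A s l
  | j2 A ?s => atoms A s l
  | zero A => l
  | one A => l
  | _ => lazymatch l with context [e] => l | _ => constr:(e :: l) end
  end.

Ltac index_of e l :=
  lazymatch l with
  | e :: _ => constr:(0)
  | _ :: ?l => let n := index_of e l in constr:(S n)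
  end.

Ltac reify A l e :=
  lazymatch e with
  | meet A ?s ?t => let s := reify A l s in let t := reify A l t in constr:(Meet s t)
  | join A ?s ?t => let s := reify A l s in let t := reify A l t in constr:(Join s t)
  | neg A ?s => let s := reify A l s in constr:(Neg s)
  | j2 A ?s => let s := reify A l s in constr:(J2 s)
  | zero A => constr:(Zero)
  | one A => constr:(One)
  | _ => let n := index_of e l in constr:(Var n)
  end.

(* Reflection: restates a goal [l = r] in [A] as an instance of [holds A s t],
   with [s] and [t] reified over the atoms of [l] and [r]. *)
Ltac reify_eq :=
  lazymatch goal with
  | |- @eq (car ?A) ?l ?r =>
      let xs := atoms A l (@nil (car A)) in
      let xs := atoms A r xs in
      let s := reify A xs l in
      let t := reify A xs r in
      change (eval A (fun n => nth n xs (zero A)) s = eval A (fun n => nth n xs (zero A)) t)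
  end.

Ltac wk_truth_table :=
  intro v; simpl;
  repeat match goal with
         | |- context [?v ?n] => lazymatch type of v with nat -> _ => destruct (v n) end
         end;
  reflexivity.

Ltac wk_identity HA := reify_eq; apply (in_V_BCA_holds _ _ _ HA); wk_truth_table.

Section VarietyMember.

Variable A : alg.
Hypothesis HA : in_V_BCA A.

Lemma in_V_BCA_IBSL : reduct_is_IBSL A.
Proof. repeat split; intros; wk_identity HA. Qed.

Lemma in_V_BCA_neg_id : zero A = one A -> forall x : A, neg A x = x.
Proof.
  intros Z x.
  assert (Ex : join A x (zero A) = x) by wk_identity HA.
  assert (Enx : join A (neg A x) (zero A) = neg A x) by wk_identity HA.
  assert (E1 : join A x (one A) = join A (neg A x) (one A)) by wk_identity HA.
  rewrite <- Z in E1. congruence.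
Qed.

Lemma semilattice_iff_zero_eq_one : reduct_is_semilattice A <-> zero A = one A.
Proof.
  split.
  - intros [_ join_meet].
    assert (E0 : meet A (zero A) (one A) = zero A) by wk_identity HA.
    assert (E1 : join A (zero A) (one A) = one A) by wk_identity HA.
    congruence.
  - intro Z. split; [exact in_V_BCA_IBSL |].
    intros x y.
    assert (E : meet A x y = neg A (join A (neg A x) (neg A y))) by wk_identity HA.
    rewrite E, !(in_V_BCA_neg_id Z). reflexivity.
Qed.

Lemma j2_const_one_iff_zero_eq_one : (forall x : A, j2 A x = one A) <-> zero A = one A.
Proof.
  split.
  - intro J. rewrite <- (J (zero A)). wk_identity HA.
  - intros Z x.
    assert (E0 : join A (j2 A x) (zero A) = j2 A x) by wk_identity HA.
    assert (E1 : join A (j2 A x) (one A) = one A) by wk_identity HA.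
    congruence.
Qed.

Lemma holds_of_j2_subst (s t : term) :
  (forall x : A, j2 A x = x) ->
  holds WKe (subst (fun n => J2 (Var n)) s) (subst (fun n => J2 (Var n)) t) ->
  holds A s t.
Proof.
  intros J Hst v.
  pose proof (in_V_BCA_holds _ _ _ HA Hst v) as E.
  rewrite !eval_subst in E. simpl in E.
  replace (fun n => j2 A (v n)) with v in E
    by (apply functional_extensionality; intro; symmetry; apply J).
  exact E.
Qed.

Lemma j2_id_iff_boolean : (forall x : A, j2 A x = x) <-> reduct_is_boolean A.
Proof.
  split.
  - intro J.
    repeat split; intros; reify_eq; apply (holds_of_j2_subst _ _ J); wk_truth_table.
  - intros (_ & _ & _ & _ & _ & _ & _ & _ & meet_one & join_neg & _) x.
    assert (E : meet A (j2 A x) (join A x (neg A x)) = x) by wk_identity HA.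
    rewrite join_neg, meet_one in E. exact E.
Qed.

End VarietyMember.

Theorem lemma4p9 (A : alg) (HA : in_V_BCA A) :
  ((forall x : A, j2 A x = x) <-> reduct_is_boolean A) /\
  ((forall x : A, j2 A x = one A) <-> reduct_is_semilattice A).
Proof.
  split.
  - exact (j2_id_iff_boolean A HA).
  - rewrite (semilattice_iff_zero_eq_one A HA).
    exact (j2_const_one_iff_zero_eq_one A HA).
Qed.
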